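(* Consider, for parameters $p>0$ and $r>0$, the planar system $$\dot x = -x-y,\qquad \dot y = ry+px-x^2y .$$ (i) For each fixed $p>1$, as $r$ crosses $1$ the equilibrium $(0,0)$ undergoes a supercritical Hopf bifurcation (negative first Lyapunov coefficient), with natural frequency $\omega^*=\sqrt{p-1}$. (ii) For each fixed $r>1$, as $p$ crosses $1$ the two equilibria $(\pm\sqrt{r-p},\mp\sqrt{r-p})$ each undergo a subcritical Hopf bifurcation (positive first Lyapunov coefficient), with natural frequency $\omega^*=\sqrt{2(r-1)}$.
   Context: This is the simplified symmetric two-dimensional Maasch–Saltzman model. The equilibria $(\pm\sqrt{r-p},\mp\sqrt{r-p})$ exist when $r>p$. *)

From Stdlib Require Import Reals.
From Coquelicot Require Import Coquelicot.
Open Scope R_scope.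

(* A (one-parameter family of) planar vector field(s): mu -> x -> y -> (xdot, ydot). *)
Definition family := R -> R -> R -> R * R.

(* Partial derivatives of a scalar function of (x,y); false = d/dx, true = d/dy. *)
Definition pd (j : bool) (g : R -> R -> R) : R -> R -> R :=
  if j then (fun x y => Derive (fun t => g x t) y)
  else (fun x y => Derive (fun t => g t y) x).

Definition comp1 (f : R -> R -> R * R) : R -> R -> R := fun x y => fst (f x y).
Definition comp2 (f : R -> R -> R * R) : R -> R -> R := fun x y => snd (f x y).
Definition compi (i : bool) (f : R -> R -> R * R) : R -> R -> R :=
  if i then comp2 f else comp1 f.

Definition jac (f : R -> R -> R * R) (x0 y0 : R) (i j : bool) : R :=
  pd j (compi i f) x0 y0.

Definition jtrace (f : R -> R -> R * R) (x0 y0 : R) : R :=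
  jac f x0 y0 false false + jac f x0 y0 true true.
Definition jdet (f : R -> R -> R * R) (x0 y0 : R) : R :=
  jac f x0 y0 false false * jac f x0 y0 true true
  - jac f x0 y0 false true * jac f x0 y0 true false.

Definition CV := (C * C)%type.
Definition cvi (v : CV) (j : bool) : C := if j then snd v else fst v.
Definition cvconj (v : CV) : CV := (Cconj (fst v), Cconj (snd v)).
Definition cip (p q : CV) : C :=
  Cplus (Cmult (Cconj (fst p)) (fst q)) (Cmult (Cconj (snd p)) (snd q)).
Definition sumb (h : bool -> C) : C := Cplus (h false) (h true).

Definition jmul (f : R -> R -> R * R) (x0 y0 : R) (v : CV) : CV :=
  (sumb (fun j => Cmult (RtoC (jac f x0 y0 false j)) (cvi v j)),
   sumb (fun j => Cmult (RtoC (jac f x0 y0 true j)) (cvi v j))).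
Definition jtmul (f : R -> R -> R * R) (x0 y0 : R) (v : CV) : CV :=
  (sumb (fun j => Cmult (RtoC (jac f x0 y0 j false)) (cvi v j)),
   sumb (fun j => Cmult (RtoC (jac f x0 y0 j true)) (cvi v j))).

(* Solution of the 2x2 complex linear system M w = v (Cramer's rule). *)
Definition csolve (m11 m12 m21 m22 : C) (v : CV) : CV :=
  let d := Cminus (Cmult m11 m22) (Cmult m12 m21) in
  (Cdiv (Cminus (Cmult m22 (fst v)) (Cmult m12 (snd v))) d,
   Cdiv (Cminus (Cmult m11 (snd v)) (Cmult m21 (fst v))) d).

Definition jinv (f : R -> R -> R * R) (x0 y0 : R) (v : CV) : CV :=
  csolve (RtoC (jac f x0 y0 false false)) (RtoC (jac f x0 y0 false true))
         (RtoC (jac f x0 y0 true false)) (RtoC (jac f x0 y0 true true)) v.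

Definition jres2 (f : R -> R -> R * R) (x0 y0 w : R) (v : CV) : CV :=
  let tiw := Cmult (RtoC (2 * w)) Ci in
  csolve (Cminus tiw (RtoC (jac f x0 y0 false false)))
         (Copp (RtoC (jac f x0 y0 false true)))
         (Copp (RtoC (jac f x0 y0 true false)))
         (Cminus tiw (RtoC (jac f x0 y0 true true))) v.

Definition Bform (f : R -> R -> R * R) (x0 y0 : R) (u v : CV) : CV :=
  let Bi i := sumb (fun j => sumb (fun k =>
      Cmult (RtoC (pd j (pd k (compi i f)) x0 y0)) (Cmult (cvi u j) (cvi v k)))) in
  (Bi false, Bi true).
Definition Cform (f : R -> R -> R * R) (x0 y0 : R) (u v w : CV) : CV :=
  let Ci' i := sumb (fun j => sumb (fun k => sumb (fun l =>
      Cmult (RtoC (pd j (pd k (pd l (compi i f))) x0 y0))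
            (Cmult (cvi u j) (Cmult (cvi v k) (cvi w l)))))) in
  (Ci' false, Ci' true).

(** * First Lyapunov coefficient (Kuznetsov, Elements of Applied Bifurcation
    Theory, invariant formula):
    l1 = 1/(2w) Re( <p, C(q,q,qbar)> - 2 <p, B(q, A^{-1} B(q,qbar))>
                    + <p, B(qbar, (2iwI - A)^{-1} B(q,q))> )
    with A q = i w q, A^T p = -i w p, <p,q> = 1, <q,q> = 1. *)
Definition lyap_formula (f : R -> R -> R * R) (x0 y0 w : R) (q p : CV) : R :=
  let qb := cvconj q in
  / (2 * w) *
  Re (Cplus (Cminus (cip p (Cform f x0 y0 q q qb))
                    (Cmult (RtoC 2) (cip p (Bform f x0 y0 q (jinv f x0 y0 (Bform f x0 y0 q qb))))))
            (cip p (Bform f x0 y0 qb (jres2 f x0 y0 w (Bform f x0 y0 q q))))).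

Definition lyap_vectors (f : R -> R -> R * R) (x0 y0 w : R) (q p : CV) : Prop :=
  jmul f x0 y0 q = (Cmult (Cmult (RtoC w) Ci) (fst q), Cmult (Cmult (RtoC w) Ci) (snd q)) /\
  jtmul f x0 y0 p = (Cmult (Copp (Cmult (RtoC w) Ci)) (fst p),
                     Cmult (Copp (Cmult (RtoC w) Ci)) (snd p)) /\
  cip p q = RtoC 1 /\ cip q q = RtoC 1.

Definition is_first_lyap (f : R -> R -> R * R) (x0 y0 w l : R) : Prop :=
  exists q p, lyap_vectors f x0 y0 w q p /\ l = lyap_formula f x0 y0 w q p.

Definition hopf_point (F : family) (E : R -> R * R) (mu0 w : R) : Prop :=
  (exists delta, 0 < delta /\
     forall mu, Rabs (mu - mu0) < delta -> F mu (fst (E mu)) (snd (E mu)) = (0, 0)) /\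
  (* eigenvalues +- i w, w > 0, at mu0 *)
  0 < w /\
  jtrace (F mu0) (fst (E mu0)) (snd (E mu0)) = 0 /\
  jdet (F mu0) (fst (E mu0)) (snd (E mu0)) = w ^ 2 /\
  (* transversality: d/dmu Re lambda(mu) = d/dmu (trace J(mu))/2 <> 0 at mu0 *)
  (exists d, is_derive (fun mu => jtrace (F mu) (fst (E mu)) (snd (E mu)) / 2) mu0 d
             /\ d <> 0).

Definition supercritical_hopf (F : family) (E : R -> R * R) (mu0 w : R) : Prop :=
  hopf_point F E mu0 w /\
  exists l, is_first_lyap (F mu0) (fst (E mu0)) (snd (E mu0)) w l /\ l < 0.

Definition subcritical_hopf (F : family) (E : R -> R * R) (mu0 w : R) : Prop :=
  hopf_point F E mu0 w /\
  exists l, is_first_lyap (F mu0) (fst (E mu0)) (snd (E mu0)) w l /\ 0 < l.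

Definition MS (p r : R) : R -> R -> R * R :=
  fun x y => (- x - y, r * y + p * x - x ^ 2 * y).

(* At both bifurcation points the Jacobian of the model is [[-1, -1], [w^2 + 1, 1]]
   (trace 0, determinant w^2), so a single pair of eigenvectors q = a (1, -(1 + i w))
   and p, with a^2 = 1 / (w^2 + 2), serves both cases, and transversality holds because
   the trace of the Jacobian moves with unit speed in the parameter.  At the origin the
   quadratic form vanishes and only the cubic term -x^2 y contributes: l1 = -a^2/(2w) < 0.
   At (x, -x) the quadratic part of -x^2 y no longer vanishes and reverses the sign:
   l1 = a^2/w > 0. *)

From Stdlib Require Import Reals Lra FunctionalExtensionality.
From Coquelicot Require Import Coquelicot.
Open Scope R_scope.

Ltac C_to_R := unfold Cdiv, Cminus, Cinv, Cmult, Cplus, Copp, Cconj, Re, RtoC, Ci; simpl.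

Ltac C_components := C_to_R; repeat (apply injective_projections; simpl).

Lemma pd_x_eq (g h : R -> R -> R) :
  (forall x y, is_derive (fun t => g t y) x (h x y)) -> pd false g = h.
Proof.
  intros Hg. do 2 (apply functional_extensionality; intro).
  apply is_derive_unique, Hg.
Qed.

Lemma pd_y_eq (g h : R -> R -> R) :
  (forall x y, is_derive (fun t => g x t) y (h x y)) -> pd true g = h.
Proof.
  intros Hg. do 2 (apply functional_extensionality; intro).
  apply is_derive_unique, Hg.
Qed.

Definition hopf_normal_jac (f : R -> R -> R * R) (x0 y0 w : R) : Prop :=
  jac f x0 y0 false false = -1 /\ jac f x0 y0 false true = -1 /\
  jac f x0 y0 true false = w ^ 2 + 1 /\ jac f x0 y0 true true = 1.

(* Complex numbers are (re, im) pairs: q = a (1, -1 - i w) and p = k (w - i, -i) with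
   k = 1 / (2 w a) are the eigenvectors of the normal Jacobian and of its transpose. *)
Definition hopf_q (a w : R) : CV := (RtoC a, (- a, - a * w)).
Definition hopf_p (a w : R) : CV := let k := / (2 * w * a) in ((w * k, - k), (0, - k)).

Section HopfNormalJacobian.

Variables (f : R -> R -> R * R) (x0 y0 w : R).
Hypotheses (normal : hopf_normal_jac f x0 y0 w) (w_neq0 : w <> 0).

Lemma jtrace_hopf_normal : jtrace f x0 y0 = 0.
Proof.
  destruct normal as (J11 & _ & _ & J22). unfold jtrace. rewrite J11, J22. ring.
Qed.

Lemma jdet_hopf_normal : jdet f x0 y0 = w ^ 2.
Proof.
  destruct normal as (J11 & J12 & J21 & J22). unfold jdet. rewrite J11, J12, J21, J22. ring.
Qed.

Lemma lyap_vectors_hopf_normal (a : R) :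
  a ^ 2 * (w ^ 2 + 2) = 1 -> lyap_vectors f x0 y0 w (hopf_q a w) (hopf_p a w).
Proof.
  intros Ha. destruct normal as (J11 & J12 & J21 & J22).
  assert (a <> 0) by (intros ->; lra).
  unfold lyap_vectors, jmul, jtmul, cip, sumb, cvi, hopf_q, hopf_p.
  rewrite J11, J12, J21, J22. C_to_R.
  repeat split; repeat (apply injective_projections; simpl); field_simplify_eq; auto; lra.
Qed.

Lemma jinv_hopf_normal v :
  jinv f x0 y0 v =
  (RtoC (/ w ^ 2) * (fst v + snd v), - RtoC (/ w ^ 2) * (RtoC (w ^ 2 + 1) * fst v + snd v))%C.
Proof.
  destruct normal as (J11 & J12 & J21 & J22). destruct v as [[v1 v2] [v3 v4]].
  assert (Hw2 : 0 < w ^ 2) by (apply pow2_gt_0; exact w_neq0).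
  unfold jinv, csolve. rewrite J11, J12, J21, J22. C_to_R.
  f_equal; f_equal; field; (split; [exact w_neq0 | intro Hc; ring_simplify in Hc; nra]).
Qed.

(* det (2 i w - A) = -3 w^2 is real. *)
Lemma jres2_hopf_normal v :
  jres2 f x0 y0 w v =
  (RtoC (- / (3 * w ^ 2)) * ((RtoC (2 * w) * Ci - 1) * fst v - snd v),
   RtoC (- / (3 * w ^ 2)) * (RtoC (w ^ 2 + 1) * fst v + (RtoC (2 * w) * Ci + 1) * snd v))%C.
Proof.
  destruct normal as (J11 & J12 & J21 & J22). destruct v as [[v1 v2] [v3 v4]].
  assert (Hw2 : 0 < w ^ 2) by (apply pow2_gt_0; exact w_neq0).
  unfold jres2, csolve. rewrite J11, J12, J21, J22. C_to_R.
  f_equal; f_equal; field; (split; [exact w_neq0 | intro Hc; ring_simplify in Hc; nra]).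
Qed.

End HopfNormalJacobian.

Lemma hopf_normalizer_exists (w : R) : exists a, a ^ 2 * (w ^ 2 + 2) = 1.
Proof.
  assert (Hs : 0 < sqrt (w ^ 2 + 2)) by (apply sqrt_lt_R0; nra).
  exists (/ sqrt (w ^ 2 + 2)).
  rewrite <- (pow2_sqrt (w ^ 2 + 2)) at 2 by nra. field. lra.
Qed.

Lemma hopf_point_intro (F : R -> R -> R -> R * R) (E : R -> R * R) (mu0 w delta : R) :
  0 < delta -> 0 < w ->
  (forall mu, Rabs (mu - mu0) < delta ->
     F mu (fst (E mu)) (snd (E mu)) = (0, 0) /\
     jtrace (F mu) (fst (E mu)) (snd (E mu)) = mu - mu0) ->
  hopf_normal_jac (F mu0) (fst (E mu0)) (snd (E mu0)) w ->
  hopf_point F E mu0 w.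
Proof.
  intros Hdelta Hw HE Hnormal.
  split; [exists delta; split; [exact Hdelta | apply HE] |].
  split; [exact Hw |].
  split; [exact (jtrace_hopf_normal _ _ _ _ Hnormal) |].
  split; [exact (jdet_hopf_normal _ _ _ _ Hnormal) |].
  exists (1 / 2); split; [| lra].
  apply is_derive_ext_loc with (f := fun mu => (mu - mu0) / 2).
  - exists (mkposreal delta Hdelta); intros mu Hmu.
    rewrite (proj2 (HE mu Hmu)). reflexivity.
  - auto_derive; [exact I | field].
Qed.

Definition MS_D1 (p r : R) (i j : bool) : R -> R -> R :=
  match i, j with
  | false, _ => fun _ _ => -1
  | true, false => fun x y => p - 2 * x * y
  | true, true => fun x _ => r - x ^ 2
  end.

Definition MS_D2 (i j k : bool) : R -> R -> R :=
  match i, j, k with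
  | false, _, _ => fun _ _ => 0
  | true, false, false => fun _ y => - 2 * y
  | true, true, true => fun _ _ => 0
  | true, _, _ => fun x _ => - 2 * x
  end.

Definition MS_D3 (i j k l : bool) : R :=
  match i, j, k, l with
  | true, true, false, false | true, false, true, false | true, false, false, true => -2
  | _, _, _, _ => 0
  end.

Ltac pd_by_derive := first [apply pd_x_eq | apply pd_y_eq]; intros; auto_derive; auto; ring.

Lemma pd_MS p r i j : pd j (compi i (MS p r)) = MS_D1 p r i j.
Proof. destruct i, j; unfold compi, comp1, comp2, MS; simpl; pd_by_derive. Qed.

Lemma pd2_MS p r i j k : pd j (pd k (compi i (MS p r))) = MS_D2 i j k.
Proof. rewrite pd_MS. destruct i, j, k; simpl; pd_by_derive. Qed.

Lemma pd3_MS p r i j k l : pd j (pd k (pd l (compi i (MS p r)))) = fun _ _ => MS_D3 i j k l.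
Proof. rewrite pd2_MS. destruct i, j, k, l; simpl; pd_by_derive. Qed.

Lemma jac_MS p r x y i j : jac (MS p r) x y i j = MS_D1 p r i j x y.
Proof. unfold jac. rewrite pd_MS. reflexivity. Qed.

Lemma jtrace_MS p r x y : jtrace (MS p r) x y = r - 1 - x ^ 2.
Proof. unfold jtrace. rewrite !jac_MS. simpl. ring. Qed.

Lemma MS_origin_equilibrium p r : MS p r 0 0 = (0, 0).
Proof. unfold MS. f_equal; ring. Qed.

Lemma MS_side_equilibrium p r x : x ^ 2 = r - p -> MS p r x (- x) = (0, 0).
Proof. intros Hx. unfold MS. f_equal; [ring | nra]. Qed.

Lemma MS_origin_hopf_normal w : hopf_normal_jac (MS (w ^ 2 + 1) 1) 0 0 w.
Proof. unfold hopf_normal_jac. rewrite !jac_MS. simpl. repeat split; ring. Qed.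

Lemma MS_side_hopf_normal x w :
  w ^ 2 = 2 * x ^ 2 -> hopf_normal_jac (MS 1 (x ^ 2 + 1)) x (- x) w.
Proof. intros Hw. unfold hopf_normal_jac. rewrite !jac_MS. simpl. repeat split; nra. Qed.

Lemma Bform_MS p r x y u v :
  Bform (MS p r) x y u v =
  (RtoC 0, RtoC (-2) * (RtoC y * fst u * fst v + RtoC x * (fst u * snd v + snd u * fst v)))%C.
Proof.
  destruct u as [[u1 u2] [u3 u4]], v as [[v1 v2] [v3 v4]].
  unfold Bform, sumb, cvi. rewrite !pd2_MS. C_to_R. f_equal; f_equal; ring.
Qed.

Lemma Cform_MS p r x y u v w :
  Cform (MS p r) x y u v w =
  (RtoC 0, RtoC (-2) * (snd u * fst v * fst w + fst u * snd v * fst w + fst u * fst v * snd w))%C.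
Proof.
  destruct u as [[u1 u2] [u3 u4]], v as [[v1 v2] [v3 v4]], w as [[w1 w2] [w3 w4]].
  unfold Cform, sumb, cvi. rewrite !pd3_MS. C_to_R. f_equal; f_equal; ring.
Qed.

Lemma Bform_MS_origin p r u v : Bform (MS p r) 0 0 u v = (RtoC 0, RtoC 0).
Proof.
  rewrite Bform_MS. destruct u as [[u1 u2] [u3 u4]], v as [[v1 v2] [v3 v4]].
  C_to_R. f_equal; f_equal; ring.
Qed.

Lemma lyap_formula_MS_origin w a : 0 < w -> a <> 0 ->
  lyap_formula (MS (w ^ 2 + 1) 1) 0 0 w (hopf_q a w) (hopf_p a w) = - a ^ 2 / (2 * w).
Proof.
  intros Hw Ha. unfold lyap_formula.
  rewrite !Bform_MS_origin, Cform_MS.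
  unfold cip, cvconj, hopf_q, hopf_p. C_to_R.
  field. lra.
Qed.

Lemma lyap_formula_MS_side x w a : 0 < w -> a <> 0 -> w ^ 2 = 2 * x ^ 2 ->
  lyap_formula (MS 1 (x ^ 2 + 1)) x (- x) w (hopf_q a w) (hopf_p a w) = a ^ 2 / w.
Proof.
  intros Hw Ha Hx.
  pose proof (MS_side_hopf_normal x w Hx) as N.
  set (f := MS 1 (x ^ 2 + 1)) in *.
  (* The terms of Kuznetsov's formula, innermost first: (c, -c) = A^-1 B(q, qb) and
     (z1, z2) = (2 i w - A)^-1 B(q, q). *)
  set (q := hopf_q a w).
  set (c := 6 * x * a ^ 2 / w ^ 2).
  set (z1 := (2 * x * a ^ 2 / w ^ 2, 4 * x * a ^ 2 / (3 * w)) : C).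
  set (z2 := (- 2 * x * a ^ 2 * (3 - 4 * w ^ 2) / (3 * w ^ 2), - 16 * x * a ^ 2 / (3 * w)) : C).
  assert (B_q_qb : Bform f x (- x) q (cvconj q) = (RtoC 0, RtoC (6 * x * a ^ 2))).
  { unfold f. rewrite Bform_MS. unfold q, hopf_q, cvconj. C_components; ring. }
  assert (Ainv_B : jinv f x (- x) (RtoC 0, RtoC (6 * x * a ^ 2)) = (RtoC c, RtoC (- c))).
  { rewrite (jinv_hopf_normal _ _ _ _ N) by lra. unfold c. C_components; field; lra. }
  assert (B_q_v : Bform f x (- x) q (RtoC c, RtoC (- c)) =
                  (RtoC 0, (6 * x * a * c, 2 * x * a * c * w))).
  { unfold f. rewrite Bform_MS. unfold q, hopf_q. C_components; ring. }
  assert (B_q_q : Bform f x (- x) q q = (RtoC 0, (6 * x * a ^ 2, 4 * x * a ^ 2 * w))).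
  { unfold f. rewrite Bform_MS. unfold q, hopf_q. C_components; ring. }
  assert (Res_B : jres2 f x (- x) w (RtoC 0, (6 * x * a ^ 2, 4 * x * a ^ 2 * w)) = (z1, z2)).
  { rewrite (jres2_hopf_normal _ _ _ _ N) by lra. unfold z1, z2. C_components; field; lra. }
  assert (B_qb_z : Bform f x (- x) (cvconj q) (z1, z2) =
                   (RtoC 0, (4 * x ^ 2 * a ^ 3 * (9 - 2 * w ^ 2) / (3 * w ^ 2),
                             12 * x ^ 2 * a ^ 3 / w))).
  { unfold f. rewrite Bform_MS. unfold q, hopf_q, cvconj, z1, z2. C_components; field; lra. }
  assert (C_q_q_qb : Cform f x (- x) q q (cvconj q) = (RtoC 0, (6 * a ^ 3, 2 * a ^ 3 * w))).
  { unfold f. rewrite Cform_MS. unfold q, hopf_q, cvconj. C_components; ring. }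
  unfold lyap_formula. fold q.
  rewrite B_q_qb, Ainv_B, B_q_v, B_q_q, Res_B, B_qb_z, C_q_q_qb.
  unfold cip, hopf_p, c. C_to_R.
  field_simplify_eq; [| lra].
  replace (w ^ 3) with (w * w ^ 2) by ring. rewrite Hx. ring.
Qed.

Lemma MS_origin_first_lyap w : 0 < w ->
  exists l, is_first_lyap (MS (w ^ 2 + 1) 1) 0 0 w l /\ l < 0.
Proof.
  intros Hw. destruct (hopf_normalizer_exists w) as [a Ha].
  assert (Ha2 : 0 < a ^ 2) by nra.
  exists (- a ^ 2 / (2 * w)). split.
  - exists (hopf_q a w), (hopf_p a w). split.
    + apply lyap_vectors_hopf_normal; [apply MS_origin_hopf_normal | lra | exact Ha].
    + symmetry. apply lyap_formula_MS_origin; [exact Hw | intros ->; lra].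
  - apply Rdiv_neg_pos; lra.
Qed.

Lemma MS_side_first_lyap x w : 0 < w -> w ^ 2 = 2 * x ^ 2 ->
  exists l, is_first_lyap (MS 1 (x ^ 2 + 1)) x (- x) w l /\ 0 < l.
Proof.
  intros Hw Hx. destruct (hopf_normalizer_exists w) as [a Ha].
  assert (Ha2 : 0 < a ^ 2) by nra.
  exists (a ^ 2 / w). split.
  - exists (hopf_q a w), (hopf_p a w). split.
    + apply lyap_vectors_hopf_normal; [apply MS_side_hopf_normal, Hx | lra | exact Ha].
    + symmetry. apply lyap_formula_MS_side; [exact Hw | intros ->; lra | exact Hx].
  - apply Rdiv_lt_0_compat; lra.
Qed.

Lemma MS_origin_supercritical p : 1 < p ->
  supercritical_hopf (fun r => MS p r) (fun _ => (0, 0)) 1 (sqrt (p - 1)).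
Proof.
  intros Hp.
  assert (Hw : 0 < sqrt (p - 1)) by (apply sqrt_lt_R0; lra).
  assert (Hp' : p = sqrt (p - 1) ^ 2 + 1) by (rewrite pow2_sqrt; lra).
  set (w := sqrt (p - 1)) in *. clearbody w. subst p.
  split.
  - apply hopf_point_intro with (delta := 1); [lra | exact Hw | |].
    + intros r _. cbn [fst snd]. rewrite MS_origin_equilibrium, jtrace_MS. split; [reflexivity | ring].
    + apply MS_origin_hopf_normal.
  - apply MS_origin_first_lyap, Hw.
Qed.

Lemma MS_side_subcritical r (E : R -> R * R) : 1 < r ->
  (forall p, p < r -> fst (E p) ^ 2 = r - p /\ snd (E p) = - fst (E p)) ->
  subcritical_hopf (fun p => MS p r) E 1 (sqrt (2 * (r - 1))).
Proof.
  intros Hr HE.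
  assert (Hw : 0 < sqrt (2 * (r - 1))) by (apply sqrt_lt_R0; lra).
  assert (Hw2 : sqrt (2 * (r - 1)) ^ 2 = 2 * (r - 1)) by (apply pow2_sqrt; lra).
  set (w := sqrt (2 * (r - 1))) in *. clearbody w.
  destruct (HE 1 Hr) as [E1 E2].
  assert (Hr' : r = fst (E 1) ^ 2 + 1) by lra.
  split.
  - apply hopf_point_intro with (delta := r - 1); [lra | exact Hw | |].
    + intros p Hp. apply Rabs_def2 in Hp.
      destruct (HE p ltac:(lra)) as [Ep1 Ep2]. rewrite Ep2, jtrace_MS.
      split; [apply MS_side_equilibrium, Ep1 | lra].
    + rewrite E2, Hr'. apply MS_side_hopf_normal. lra.
  - rewrite E2, Hr'. apply MS_side_first_lyap; lra.
Qed.

Theorem mainTheorem2 :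
  (forall p : R, 1 < p ->
     supercritical_hopf (fun r => MS p r) (fun _ => (0, 0)) 1 (sqrt (p - 1))) /\
  (forall r : R, 1 < r ->
     subcritical_hopf (fun p => MS p r) (fun p => (sqrt (r - p), - sqrt (r - p))) 1
       (sqrt (2 * (r - 1))) /\
     subcritical_hopf (fun p => MS p r) (fun p => (- sqrt (r - p), sqrt (r - p))) 1
       (sqrt (2 * (r - 1)))).
Proof.
  split; [exact MS_origin_supercritical |].
  intros r Hr.
  split; apply MS_side_subcritical; auto; intros p Hp; cbn [fst snd].
  - split; [apply pow2_sqrt; lra | reflexivity].
  - split; [| ring].
    replace ((- sqrt (r - p)) ^ 2) with (sqrt (r - p) ^ 2) by ring.
    apply pow2_sqrt; lra.
Qed.
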